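(* Let $x\in\mathcal X$ and $C_1,C_2\in\mathcal I$, and suppose the lines $\ell_{x,C_1}$ and $\ell_{x,C_2}$ intersect at some $\mu>0$. If $\ell_{x,C_1}$ has a larger intercept (value at $\mu=0$) than $\ell_{x,C_2}$, then $w(C_1)>w(C_2)$.
   Context: Let $(X,Y)\sim P_{XY}$ on $\mathcal X\times\mathcal Y$, $\alpha\in(0,1)$, $\mathcal I$ a finite collection of subsets of $\mathcal Y$, $w:\mathcal I\to(0,B)$ a bounded positive weight. For $C\in\mathcal I$ let $p_C(x)=\mathbb P(Y\in C\mid X=x)$ and $\ell_{x,C}(\mu)=w(C)p_C(x)+\mu(p_C(x)-(1-\alpha))$. *)

From HB Require Import structures.
From mathcomp Require Import all_boot all_order all_algebra.
From mathcomp Require Import all_classical all_reals all_analysis.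
Set Implicit Arguments. Unset Strict Implicit. Unset Printing Implicit Defensive.
Import Order.TTheory GRing.Theory Num.Theory.
Local Open Scope ring_scope.
Local Open Scope classical_set_scope.

(* The conditional law of Y given X = x is modelled by a family
   PYgX : X -> probability Y R (a regular conditional distribution),
   so that p_C(x) = P(Y \in C | X = x) = PYgX x C. *)
Definition pC d1 d2 (X : measurableType d1) (Y : measurableType d2)
  (R : realType) (PYgX : X -> probability Y R) (C : set Y) (x : X) : R :=
  fine (PYgX x C).

Definition ell d1 d2 (X : measurableType d1) (Y : measurableType d2)
  (R : realType) (PYgX : X -> probability Y R) (alpha : R) (w : set Y -> R)
  (x : X) (C : set Y) (mu : R) : R :=
  w C * pC PYgX C x + mu * (pC PYgX C x - (1 - alpha)).

From HB Require Import structures.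
From mathcomp Require Import all_boot all_order all_algebra.
From mathcomp Require Import all_classical all_reals all_analysis.
Import Order.TTheory GRing.Theory Num.Theory.
Local Open Scope ring_scope.
Local Open Scope classical_set_scope.

(* Two lines crossing at some [mu > 0]: the one starting higher at [0] must
   have the smaller slope.  For [ell] the slope is [p_C(x) - (1 - alpha)], so
   [p_C1(x) < p_C2(x)]; with nonnegative weights and probabilities,
   [w(C1) <= w(C2)] would then give [w(C1) p_C1(x) <= w(C2) p_C2(x)], against
   the assumption on the intercepts. *)

Lemma slope_lt_of_cross (R : realDomainType) (a1 a2 b1 b2 mu : R) :
  0 < mu -> a1 + mu * b1 = a2 + mu * b2 -> a2 < a1 -> b1 < b2.
Proof.
move=> mu_gt0 cross a21; rewrite -(ltr_pM2l mu_gt0) -(ltrD2l a2).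
by rewrite -cross ltrD2r.
Qed.

Section Lines.
Context {d1 d2 : measure_display} {X : measurableType d1}.
Context {Y : measurableType d2} {R : realType} (PYgX : X -> probability Y R).

Lemma pC_ge0 (C : set Y) (x : X) : 0 <= pC PYgX C x.
Proof. by rewrite /pC fine_ge0 // measure_ge0. Qed.

Lemma ell_at0 (alpha : R) (w : set Y -> R) (x : X) (C : set Y) :
  ell PYgX alpha w x C 0 = w C * pC PYgX C x.
Proof. by rewrite /ell mul0r addr0. Qed.

End Lines.

Theorem lemma4 (d1 d2 : measure_display) (X : measurableType d1)
  (Y : measurableType d2) (R : realType) (PYgX : X -> probability Y R)
  (alpha : R) (I : set (set Y)) (w : set Y -> R) (B : R)
  (halpha : 0 < alpha < 1)
  (hI : finite_set I) (hImeas : forall C, I C -> measurable C)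
  (hw : forall C, I C -> 0 < w C < B)
  (x : X) (C1 C2 : set Y) (hC1 : I C1) (hC2 : I C2)
  (hint : exists mu : R, 0 < mu /\
     ell PYgX alpha w x C1 mu = ell PYgX alpha w x C2 mu)
  (hicpt : ell PYgX alpha w x C1 0 > ell PYgX alpha w x C2 0) :
  w C1 > w C2.
Proof.
case: hint => mu [mu_gt0 cross]; rewrite !ell_at0 in hicpt.
have p12 : pC PYgX C1 x < pC PYgX C2 x.
  rewrite -(ltrD2r (- (1 - alpha))); exact: slope_lt_of_cross mu_gt0 cross hicpt.
have /andP[w1_gt0 _] := hw _ hC1.
rewrite ltNge; apply/negP => w12; move: hicpt; rewrite ltNge.
by rewrite (ler_pM (ltW w1_gt0) (pC_ge0 PYgX C1 x) w12 (ltW p12)).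
Qed.
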